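(* Let $k,r \in \mathbb{N}$ and $s \in [0, r]$. Then \[\mathsf{D}_k(C_{2}^{r}) \le \mathsf{D}_{\mathsf{D}_{k}(C_2^s) - s} (C_2^{r-s}) + s.\]
   Context: $C_2^m$ is the elementary abelian $2$-group of rank $m$ ($C_2^0$ is the trivial group). A sequence over a finite abelian group $G$ is a finite unordered list of elements with repetitions; zero-sum means its terms sum to $0$. $\mathsf{D}_k(G)$ ($k\in\mathbb{N}$) is the smallest $\ell$ such that every sequence over $G$ of length at least $\ell$ has $k$ disjoint non-empty zero-sum subsequences. *)

From HB Require Import structures.
From mathcomp Require Import all_boot all_algebra.
From mathcomp Require Import boolp.
Set Implicit Arguments. Unset Strict Implicit. Unset Printing Implicit Defensive.
Import GRing.Theory.
Local Open Scope ring_scope.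

Definition C2pow (m : nat) := 'rV['F_2]_m.

Definition has_k_disjoint_zs (G : zmodType) (k : nat) (s : seq G) : Prop :=
  exists f : 'I_(size s) -> option 'I_k,
    forall j : 'I_k,
      (exists i : 'I_(size s), f i = Some j) /\
      \sum_(i : 'I_(size s) | f i == Some j) nth 0 s i = 0.

Definition Dk_ok (G : zmodType) (k l : nat) : Prop :=
  forall s : seq G, (l <= size s)%N -> has_k_disjoint_zs k s.

(* D_k(G): the smallest such l (defined as 0 if none exists; it always exists
   for finite G). *)
Definition Dk (G : zmodType) (k : nat) : nat :=
  match pselect (exists l, Dk_ok G k l) with
  | left h => @ex_minn (fun l => `[< Dk_ok G k l >]) (let: ex_intro l hl := h in
                 ex_intro _ l (asboolT hl))
  | right _ => 0%N
  end.

From mathcomp Require Import all_boot all_algebra boolp.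
Set Implicit Arguments. Unset Strict Implicit. Unset Printing Implicit Defensive.
Import GRing.Theory.
Local Open Scope ring_scope.

(* Let m = D_k(C_2^s) - s and take a sequence over C_2^(s+t) of length at least
   D_m(C_2^t) + s. Its first s terms span at most s dimensions, so after a change
   of basis they lie in the coordinate subspace C_2^s. Projecting the remaining
   terms onto the last t coordinates yields m disjoint blocks whose sums lie in
   C_2^s as well. These s + m >= D_k(C_2^s) elements of C_2^s contain k disjoint
   zero-sum subsequences, and expanding each block back into its terms gives k
   disjoint zero-sum subsequences of the original sequence. *)

Lemma Dk_least (G : zmodType) k l :
  Dk_ok G k l -> Dk_ok G k (Dk G k) /\ (Dk G k <= l)%N.
Proof.
move=> okl; rewrite /Dk; case: pselect => [?|[]]; last by exists l.
by case: ex_minnP => n /asboolP okn min_n; split => //; apply/min_n/asboolP.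
Qed.

Lemma half_eqE q j : (q./2 == j) = (q == j.*2) || (q == j.*2.+1).
Proof.
apply/eqP/orP => [<-|[]/eqP->]; last 2 first.
- exact: doubleK.
- by rewrite -[j.*2.+1]/(true + j.*2)%N half_bit_double.
by move: (odd_double_half q); case: odd => /= qE; [right|left]; rewrite -{1}qE.
Qed.

Section Labellings.
Variable G : zmodType.
Implicit Types (S : seq G) (k L : nat).

Definition zs_labelling k S (f : nat -> option 'I_k) : Prop :=
  forall j, (exists2 i, (i < size S)%N & f i = Some j) /\
            \sum_(0 <= i < size S | f i == Some j) S`_i = 0.

Lemma has_k_disjoint_zsP k S :
  has_k_disjoint_zs k S <-> exists f : nat -> option 'I_k, zs_labelling S f.
Proof.
split=> [[f hf]|[f hf]].
  exists (fun i => if insub i is Some i' then f i' else None) => j.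
  have [[i0 fi0] sum0] := hf j; split.
    by exists i0 => //; rewrite valK.
  by rewrite big_mkord -[RHS]sum0; apply: eq_bigl => i; rewrite valK.
exists (fun i => f i) => j; have [[i lti fi] sum0] := hf j; split.
  by exists (Ordinal lti).
by rewrite big_mkord in sum0.
Qed.

Lemma has_k_disjoint_zs_map (H : zmodType) (phi : G -> H) k S :
  phi 0 = 0 -> {morph phi : x y / x + y} ->
  has_k_disjoint_zs k S -> has_k_disjoint_zs k (map phi S).
Proof.
move=> phi0 phiD; rewrite /has_k_disjoint_zs size_map => -[f hf].
exists f => j; have [fj sum0] := hf j; split=> //.
rewrite -[RHS]phi0 -sum0 (big_morph phi phiD phi0).
by apply: eq_bigr => i _; rewrite (nth_map 0).
Qed.

Definition block_sums S L (g : nat -> option 'I_L) : seq G :=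
  [seq \sum_(0 <= i < size S | g i == Some p) S`_i | p <- enum 'I_L].

Lemma size_block_sums S L (g : nat -> option 'I_L) : size (block_sums S g) = L.
Proof. by rewrite size_map size_enum_ord. Qed.

Lemma has_k_disjoint_zs_block_sums k S L (g : nat -> option 'I_L) :
  (forall p, exists2 i, (i < size S)%N & g i = Some p) ->
  has_k_disjoint_zs k (block_sums S g) -> has_k_disjoint_zs k S.
Proof.
move=> g_onto; rewrite !has_k_disjoint_zsP => -[h hh].
exists (fun i => obind (fun p => h (val p)) (g i)) => j.
have [[q ltqL hq] sum0] := hh j; rewrite size_block_sums in ltqL sum0; split.
  by have [i lti gi] := g_onto (Ordinal ltqL); exists i; rewrite // gi.
rewrite -[RHS]sum0 [RHS]big_mkord.
under [RHS]eq_bigr => p _ do rewrite (nth_map p) ?size_enum_ord // nth_ord_enum.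
rewrite (exchange_big_dep (fun i => obind (fun p => h (val p)) (g i) == Some j)) /=; last first.
  by move=> i p hp /eqP ->.
apply: eq_bigr => i; case: (g i) => //= p hp.
rewrite (big_pred1 p) // => p' /=; have [->|ne] := eqVneq p' p; first by rewrite hp !eqxx.
by apply/negbTE; apply: contra ne => /andP[_ /eqP[->]].
Qed.

Lemma has_k_disjoint_zs_repeated (x : G) k S :
  x + x = 0 -> (k.*2 <= count_mem x S)%N -> has_k_disjoint_zs k S.
Proof.
move=> xx0 le_k; apply/has_k_disjoint_zsP.
pose P := [seq i <- iota 0 (size S) | S`_i == x].
have uniqP : uniq P by rewrite filter_uniq // iota_uniq.
have sizeP : size P = count_mem x S.
  by rewrite size_filter -[in RHS](mkseq_nth 0 S) /mkseq count_map; apply: eq_count.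
have memP i : (i \in P) = (i < size S)%N && (S`_i == x).
  by rewrite mem_filter mem_iota andbC.
(* The occurrences of x number 2j and 2j + 1 form block j. *)
pose f i : option 'I_k := if i \in P then insub (index i P)./2 else None.
exists f => j; set a := P`_(j.*2); set b := P`_(j.*2.+1).
have ltbP : (j.*2.+1 < size P)%N.
  by rewrite sizeP; apply: leq_trans le_k; rewrite -doubleS leq_double.
have ltaP : (j.*2 < size P)%N by apply: ltnW.
have /andP[ltaS /eqP Sa] : (a < size S)%N && (S`_a == x) by rewrite -memP mem_nth.
have /andP[ltbS /eqP Sb] : (b < size S)%N && (S`_b == x) by rewrite -memP mem_nth.
have fE i : (f i == Some j) = (i == a) || (i == b).
  rewrite /f; case: ifP => [iP|iNP]; last first.
    by apply/esym/negbTE; apply/negP => /orP[]/eqP eqi; rewrite eqi mem_nth in iNP.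
  rewrite -[i in i == a](nth_index 0%N iP) -[i in i == b](nth_index 0%N iP).
  rewrite !nth_uniq ?index_mem // -half_eqE.
  case: insubP => [p _ <-|]; first by rewrite (inj_eq Some_inj) -val_eqE.
  by move=> ge; apply/esym/negbTE; apply: contraNneq ge => ->.
split; first by exists a => //; apply/eqP; rewrite fE eqxx.
have neab : a != b by rewrite nth_uniq // (ltn_eqF (ltnSn _)).
rewrite (eq_bigl _ _ fE) big_mkord (bigD1 (Ordinal ltaS)) ?eqxx //=.
rewrite (bigD1 (Ordinal ltbS)) ?eqxx ?orbT //=; last by rewrite -val_eqE /= eq_sym.
rewrite big1 ?addr0 ?Sa ?Sb // => i /andP[/andP[/orP[] /eqP eqi nea] neb].
- by case/eqP: nea; apply: val_inj.
- by case/eqP: neb; apply: val_inj.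
Qed.

End Labellings.

Lemma sum_count_mem (T : finType) (S : seq T) : (\sum_x count_mem x S)%N = size S.
Proof.
rewrite -sum1_size [RHS](partition_big id predT) //=.
by apply: eq_bigr => x _; rewrite sum1_count.
Qed.

Lemma exists_count_mem_geq (T : finType) (S : seq T) c :
  (0 < #|T|)%N -> (c * #|T| <= size S)%N -> exists x, (c <= count_mem x S)%N.
Proof.
move=> T_gt0 le_cS; apply/existsP; apply: contraLR le_cS => /existsPn lt_count.
rewrite -ltnNge -sum_count_mem; case: c lt_count => [|c] lt_count.
  by have [x _] := card_gt0P T_gt0; have := lt_count x.
apply: (@leq_ltn_trans (c * #|T|)); last by rewrite ltn_pmul2r.
rewrite mulnC -sum_nat_const; apply: leq_sum => x _.
by rewrite -ltnS ltnNge lt_count.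
Qed.

Lemma Dk_ok_char2 (G : finZmodType) k :
  (forall x : G, x + x = 0) -> Dk_ok G k (k.*2 * #|G|).
Proof.
move=> char2 S le_S.
have G_gt0 : (0 < #|G|)%N by apply/card_gt0P; exists 0.
have [x le_k] := exists_count_mem_geq G_gt0 le_S.
exact: has_k_disjoint_zs_repeated (char2 x) le_k.
Qed.

Lemma has_k_disjoint_zs_mulmx (R : comUnitRingType) n (A : 'M[R]_n) k
    (S : seq 'rV[R]_n) :
  A \in unitmx -> has_k_disjoint_zs k [seq x *m A | x <- S] -> has_k_disjoint_zs k S.
Proof.
move=> A_unit /(@has_k_disjoint_zs_map _ _ (mulmx^~ (invmx A))).
rewrite -map_comp (eq_map (mulmxK A_unit)) map_id.
by apply; [exact: mul0mx | move=> x y; rewrite mulmxDl].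
Qed.

Lemma rsubmx_mul_invmx_row_ebase (F : fieldType) s t (M : 'M[F]_(s, s + t)) :
  rsubmx (M *m invmx (row_ebase M)) = 0.
Proof.
(* Gaussian elimination: M = L *m pid_mx r *m row_ebase M with r <= s. *)
rewrite -{1}(mulmx_ebase M) mulmxK ?row_ebase_unit // -mulmx_rsub.
have -> : rsubmx (pid_mx (\rank M) : 'M[F]_(s, s + t)) = 0; last exact: mulmx0.
apply/matrixP => i j; rewrite !mxE /=.
by rewrite ltn_eqF // (leq_trans (ltn_ord i) (leq_addr _ _)).
Qed.

Section Coordinates.
Variables (R : zmodType) (s t : nat).

Lemma has_k_disjoint_zs_lsubmx k (S : seq 'rV[R]_(s + t)) :
  {in S, forall x, rsubmx x = 0} ->
  has_k_disjoint_zs k [seq lsubmx x | x <- S] -> has_k_disjoint_zs k S.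
Proof.
pose extend (x : 'rV[R]_s) : 'rV[R]_(s + t) := row_mx x 0.
move=> rS0; have lsubmxK : {in S, extend \o lsubmx =1 id}.
  by move=> x /rS0 /= rx; rewrite /extend -rx hsubmxK.
move/(@has_k_disjoint_zs_map _ _ extend).
rewrite -map_comp; move/eq_in_map: lsubmxK => ->; rewrite map_id.
by apply; [exact: row_mx0 | move=> x y; rewrite add_row_mx addr0].
Qed.

Lemma has_k_disjoint_zs_rsubmx_prefix k m Dm D (S : seq 'rV[R]_(s + t)) :
  Dk_ok 'rV[R]_t m Dm -> Dk_ok 'rV[R]_s k D -> (D <= s + m)%N ->
  (Dm + s <= size S)%N -> (forall i, (i < s)%N -> rsubmx S`_i = 0) ->
  has_k_disjoint_zs k S.
Proof.
move=> okDm okD le_D le_S rS_prefix.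
have le_sS : (s <= size S)%N by apply: leq_trans (leq_addl _ _) le_S.
pose Rest := [seq rsubmx x | x <- drop s S].
have size_Rest : size Rest = (size S - s)%N by rewrite size_map size_drop.
have [h hh] : exists h : nat -> option 'I_m, zs_labelling Rest h.
  by apply/has_k_disjoint_zsP/okDm; rewrite size_Rest -(leq_add2r s) subnK.
(* Each of the first s terms is a block of its own; the tail is grouped by h. *)
pose g i : option 'I_(s + m) :=
  if insub i is Some a then Some (lshift m a) else omap (@rshift s m) (h (i - s)%N).
have gE q : g (q + s)%N = omap (@rshift s m) (h q).
  by rewrite /g insubF ?addnK // ltnNge leq_addl.
apply: (@has_k_disjoint_zs_block_sums _ _ _ _ g).
  move=> p; case: (split_ordP p) => [a ->|b ->].
    by exists a; [exact: leq_trans (ltn_ord a) le_sS | rewrite /g valK].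
  have [[q lt_q hq] _] := hh b; rewrite size_Rest in lt_q.
  by exists (q + s)%N; [rewrite addnC -ltn_subRL | rewrite gE hq].
apply: has_k_disjoint_zs_lsubmx; last by apply: okD; rewrite size_map size_block_sums.
move=> _ /mapP[p _ ->]; rewrite raddf_sum /=.
rewrite (@big_cat_nat _ _ _ s) //=.
rewrite big_nat_cond big1 ?add0r; last by move=> i /andP[/andP[_ /rS_prefix]].
rewrite -{1}(add0n s) big_addn.
case: (split_ordP p) => [a ->|b ->].
  apply: big1 => q; rewrite gE; case: (h q) => //= c.
  by move=> /eqP[eq_ca]; have := ltn_ord a; rewrite -eq_ca ltnNge leq_addr.
rewrite -[RHS](hh b).2 size_Rest big_nat_cond [RHS]big_nat_cond.
apply: eq_big => [q|q /andP[/andP[_ lt_q] _]].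
  by rewrite gE; case: (h q) => //= c; rewrite !(inj_eq Some_inj) (inj_eq (@rshift_inj _ _)).
by rewrite [RHS](nth_map 0) ?size_drop // nth_drop [(s + q)%N]addnC.
Qed.

End Coordinates.

Lemma Dk_ok_rV_add (F : fieldType) s t k m Dm D :
  Dk_ok 'rV[F]_t m Dm -> Dk_ok 'rV[F]_s k D -> (D <= s + m)%N ->
  Dk_ok 'rV[F]_(s + t) k (Dm + s).
Proof.
move=> okDm okD le_D S le_S; pose M := \matrix_(i < s) S`_i.
apply: (@has_k_disjoint_zs_mulmx _ _ (invmx (row_ebase M))).
  by rewrite unitmx_inv row_ebase_unit.
apply: has_k_disjoint_zs_rsubmx_prefix okDm okD le_D _ _; first by rewrite size_map.
move=> i lt_is; rewrite (nth_map 0); last exact: leq_trans lt_is (leq_trans (leq_addl _ _) le_S).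
rewrite -(rowK (fun i : 'I_s => S`_i) (Ordinal lt_is)) -mulmx_rsub -row_mul.
by rewrite mulmx_rsub rsubmx_mul_invmx_row_ebase row0.
Qed.

Lemma C2pow_addrr n (x : C2pow n) : x + x = 0.
Proof. by apply/matrixP => i j; rewrite !mxE addrr_pchar2 // pchar_Fp. Qed.

Theorem theorem7p15 (k r s : nat) (hk : (0 < k)%N) (hsr : (s <= r)%N) :
  (Dk (C2pow r) k <= Dk (C2pow (r - s)) (Dk (C2pow s) k - s) + s)%N.
Proof.
have [t ->] : exists t, r = (s + t)%N by exists (r - s)%N; rewrite subnKC.
rewrite addKn; set D := Dk (C2pow s) k.
have [okD _] := Dk_least (@Dk_ok_char2 _ k (@C2pow_addrr s)).
have [okDm _] := Dk_least (@Dk_ok_char2 _ (D - s)%N (@C2pow_addrr t)).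
have le_D : (D <= s + (D - s))%N by rewrite -leq_subLR.
exact: (Dk_least (Dk_ok_rV_add okDm okD le_D)).2.
Qed.
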